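(* Let $P>0$ and $\sigma_b^2>0$. For each integer $L\ge1$ let $\beta_L\in(0,1)$ be the solution of $$\frac{(1-\beta^{2L})^2}{L^2\beta^{2L}(1-\beta^2)}=\frac{P}{\sigma_b^2 L},$$ and let $C_{sum}^{(L)}=-L\log_2(\beta_L)$. Then $$\lim_{L\to\infty}C_{sum}^{(L)}=\frac{\alpha}{\ln 2},$$ where $\alpha>0$ satisfies $$\frac{(1-e^{-2\alpha})^2}{2\alpha e^{-2\alpha}}=\frac{P}{\sigma_b^2}.$$
   Context: $C_{sum}^{(L)}$ is the maximum sum rate, with perfect feedback and broadcast SNR $P/\sigma_b^2$, of the $L$-user BMCL linear feedback scheme for the real AWGN broadcast channel with feedback; the claim is a statement about the displayed quantities only. *)

From Stdlib Require Import Reals.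
From Coquelicot Require Import Coquelicot.
Open Scope R_scope.

Definition log2 (x : R) : R := ln x / ln 2.

Definition beta_eq (P sb2 : R) (L : nat) (b : R) : Prop :=
  (1 - b ^ (2 * L)) ^ 2 / (INR L ^ 2 * b ^ (2 * L) * (1 - b ^ 2))
  = P / (sb2 * INR L).

Definition alpha_eq (P sb2 a : R) : Prop :=
  (1 - exp (-2 * a)) ^ 2 / (2 * a * exp (-2 * a)) = P / sb2.

Definition Csum (beta : nat -> R) (L : nat) : R := - INR L * log2 (beta L).

(* Write beta_L = exp (- a_L / L), so that C_sum^(L) = a_L / ln 2.  The equation
   for beta_L becomes G(a_L) * phi(2 a_L / L) = P / sb2, where G = alpha_snr is
   the function defining alpha and phi(x) = x / (1 - e^-x) lies in [1, 1 + x].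
   Since G(a) = 2 sinh(a)^2 / a is strictly increasing, this forces a_L <= alpha
   and squeezes G(a_L) to P / sb2 = G(alpha), hence a_L -> alpha. *)

From Stdlib Require Import Reals Lra Lia.
From Coquelicot Require Import Coquelicot.
Open Scope R_scope.

Lemma one_sub_exp_opp_le (x : R) : 1 - exp (- x) <= x.
Proof. pose proof (exp_ineq1_le (- x)); lra. Qed.

Lemma le_one_sub_exp_opp_mul (x : R) : x <= (1 - exp (- x)) * (1 + x).
Proof.
  assert (Hinv : exp (- x) * exp x = 1).
  { rewrite <- exp_plus; replace (- x + x) with 0 by ring; apply exp_0. }
  pose proof (exp_ineq1_le x) as Hx.
  pose proof (exp_pos (- x)) as Hpos.
  nra.
Qed.

Lemma one_sub_exp_opp_gt0 (x : R) : 0 < x -> 0 < 1 - exp (- x).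
Proof.
  intro Hx; assert (exp (- x) < exp 0) by (apply exp_increasing; lra).
  rewrite exp_0 in *; lra.
Qed.

Definition exp_ratio (x : R) : R := x / (1 - exp (- x)).

Lemma exp_ratio_bounds (x : R) : 0 < x -> 1 <= exp_ratio x <= 1 + x.
Proof.
  intro Hx; pose proof (one_sub_exp_opp_gt0 x Hx) as Hd.
  pose proof (one_sub_exp_opp_le x); pose proof (le_one_sub_exp_opp_mul x).
  unfold exp_ratio; split.
  - apply Rle_div_r; lra.
  - apply Rle_div_l; lra.
Qed.

Definition alpha_snr (a : R) : R := (1 - exp (-2 * a)) ^ 2 / (2 * a * exp (-2 * a)).

Lemma alpha_snr_sinh (a : R) : a <> 0 -> alpha_snr a = 2 * sinh a ^ 2 / a.
Proof.
  intro Ha; unfold alpha_snr, sinh.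
  replace (-2 * a) with (- a + - a) by ring; rewrite exp_plus, exp_Ropp.
  pose proof (exp_pos a); field; lra.
Qed.

Lemma is_derive_sinh_sqr_div (a : R) : a <> 0 ->
  is_derive (fun x => 2 * sinh x ^ 2 / x) a
            (2 * sinh a * (2 * a * cosh a - sinh a) / a ^ 2).
Proof. intro Ha; unfold sinh, cosh; auto_derive; [easy | field; easy]. Qed.

Lemma sinh_gt0 (a : R) : 0 < a -> 0 < sinh a.
Proof. intro Ha; rewrite <- sinh_0; now apply sinh_lt. Qed.

Lemma sinh_lt_mul_cosh (a : R) : 0 < a -> sinh a < 2 * a * cosh a.
Proof.
  intro Ha; unfold sinh, cosh.
  pose proof (one_sub_exp_opp_le (2 * a)) as Hle.
  replace (- (2 * a)) with (- a + - a) in Hle by ring.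
  rewrite exp_plus in Hle.
  assert (Hinv : exp a * exp (- a) = 1).
  { rewrite <- exp_plus; replace (a + - a) with 0 by ring; apply exp_0. }
  pose proof (exp_pos a); pose proof (exp_pos (- a)); nra.
Qed.

Lemma alpha_snr_lt (x y : R) : 0 < x -> x < y -> alpha_snr x < alpha_snr y.
Proof.
  intros Hx Hxy; rewrite !alpha_snr_sinh by lra.
  destruct (MVT_cor2 (fun x => 2 * sinh x ^ 2 / x)
              (fun a => 2 * sinh a * (2 * a * cosh a - sinh a) / a ^ 2) x y Hxy)
    as [c [Hmvt Hc]].
  { intros c Hc; apply is_derive_Reals, is_derive_sinh_sqr_div; lra. }
  assert (Hder : 0 < 2 * sinh c * (2 * c * cosh c - sinh c) / c ^ 2).
  { pose proof (sinh_gt0 c ltac:(lra)); pose proof (sinh_lt_mul_cosh c ltac:(lra)).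
    apply Rdiv_lt_0_compat; [nra | apply pow_lt; lra]. }
  nra.
Qed.

Lemma exp_pow (x : R) (n : nat) : exp x ^ n = exp (INR n * x).
Proof. rewrite <- Rpower_pow by apply exp_pos; unfold Rpower; now rewrite ln_exp. Qed.

Lemma beta_eq_exp (P sb2 a : R) (L : nat) : (1 <= L)%nat -> 0 < a ->
  beta_eq P sb2 L (exp (- a / INR L)) ->
  alpha_snr a * exp_ratio (2 * a / INR L) = P / sb2.
Proof.
  intros HL Ha; unfold beta_eq, alpha_snr, exp_ratio.
  assert (HLpos : 0 < INR L) by (apply lt_0_INR; lia).
  rewrite !exp_pow, mult_INR.
  replace (INR 2 * INR L * (- a / INR L)) with (-2 * a) by (simpl; field; lra).
  replace (INR 2 * (- a / INR L)) with (- (2 * a / INR L)) by (simpl; field; lra).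
  pose proof (exp_pos (-2 * a)).
  pose proof (one_sub_exp_opp_gt0 (2 * a / INR L) ltac:(apply Rdiv_lt_0_compat; lra)).
  intro Heq.
  replace (P / sb2) with (INR L * (P / (sb2 * INR L))).
  2: { unfold Rdiv; rewrite Rinv_mult; set (u := / sb2); field; lra. }
  rewrite <- Heq; field; lra.
Qed.

Lemma alpha_snr_gt0 (a : R) : 0 < a -> 0 < alpha_snr a.
Proof.
  intro Ha; rewrite alpha_snr_sinh by lra.
  pose proof (sinh_gt0 a Ha); apply Rdiv_lt_0_compat; nra.
Qed.

Lemma alpha_snr_sandwich (P sb2 alpha a : R) (L : nat) :
  (1 <= L)%nat -> 0 < a -> beta_eq P sb2 L (exp (- a / INR L)) ->
  0 < alpha -> alpha_eq P sb2 alpha ->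
  P / sb2 / (1 + 2 * alpha / INR L) <= alpha_snr a <= P / sb2.
Proof.
  intros HL Ha Hbeta Halpha Hsnr_alpha.
  assert (HLpos : 0 < INR L) by (apply lt_0_INR; lia).
  pose proof (beta_eq_exp P sb2 a L HL Ha Hbeta) as Hsnr.
  pose proof (alpha_snr_gt0 a Ha) as Hpos.
  destruct (exp_ratio_bounds (2 * a / INR L)) as [Hlo Hhi].
  { apply Rdiv_lt_0_compat; lra. }
  assert (Hupper : alpha_snr a <= P / sb2) by (rewrite <- Hsnr; nra).
  assert (Ha_le : a <= alpha).
  { apply Rnot_lt_le; intro Hlt.
    pose proof (alpha_snr_lt alpha a Halpha Hlt).
    change (alpha_snr alpha = P / sb2) in Hsnr_alpha; lra. }
  assert (Hfactor : 2 * a / INR L <= 2 * alpha / INR L)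
    by (apply Rmult_le_compat_r; [left; apply Rinv_0_lt_compat |]; lra).
  assert (Hden : 0 < 1 + 2 * alpha / INR L)
    by (assert (0 < 2 * alpha / INR L) by (apply Rdiv_lt_0_compat; lra); lra).
  split; [| exact Hupper].
  apply Rle_div_l; [exact Hden |].
  rewrite <- Hsnr; apply Rmult_le_compat_l; lra.
Qed.

Lemma is_lim_seq_div_one_add_inv (s c : R) :
  is_lim_seq (fun n => s / (1 + c / INR n)) s.
Proof.
  assert (Hinv : is_lim_seq (fun n => c / INR n) 0).
  { replace (Finite 0) with (Rbar_mult c (Rbar_inv p_infty)) by (simpl; f_equal; ring).
    apply is_lim_seq_scal_l, is_lim_seq_inv; [apply is_lim_seq_INR | discriminate]. }
  replace (Finite s) with (Finite (s / (1 + 0))) by (f_equal; field).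
  apply is_lim_seq_div'; [apply is_lim_seq_const | | lra].
  apply is_lim_seq_plus'; [apply is_lim_seq_const | exact Hinv].
Qed.

Lemma is_lim_seq_of_lt_image (f : R -> R) (u : nat -> R) (x : R) :
  (forall y z, 0 < y -> y < z -> f y < f z) -> 0 < x ->
  eventually (fun n => 0 < u n) ->
  is_lim_seq (fun n => f (u n)) (f x) -> is_lim_seq u x.
Proof.
  intros Hmono Hx Hpos Hlim; apply is_lim_seq_spec; intro eps.
  set (d := Rmin eps x / 2).
  assert (Hd : 0 < d < eps /\ d < x).
  { pose proof (cond_pos eps); pose proof (Rmin_l eps x); pose proof (Rmin_r eps x).
    assert (0 < Rmin eps x) by (apply Rmin_case; lra); unfold d; lra. }
  assert (Hmono_le : forall y z, 0 < y -> y <= z -> f y <= f z).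
  { intros y z Hy [Hyz | <-]; [left; now apply Hmono | lra]. }
  assert (Hlo : f (x - d) < f x) by (apply Hmono; lra).
  assert (Hhi : f x < f (x + d)) by (apply Hmono; lra).
  set (e := Rmin (f x - f (x - d)) (f (x + d) - f x)).
  assert (He : 0 < e) by (apply Rmin_case; lra).
  assert (He_lo : e <= f x - f (x - d)) by apply Rmin_l.
  assert (He_hi : e <= f (x + d) - f x) by apply Rmin_r.
  apply is_lim_seq_spec in Hlim; specialize (Hlim (mkposreal e He)).
  generalize (filter_and _ _ Hpos Hlim); apply filter_imp; simpl.
  intros n [Hun Hfn]; apply Rabs_def2 in Hfn.
  apply Rabs_def1.
  - destruct (Rlt_or_le (u n) (x + d)) as [? | Hge]; [lra |].
    pose proof (Hmono_le (x + d) (u n) ltac:(lra) Hge); lra.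
  - destruct (Rlt_or_le (x - d) (u n)) as [? | Hle]; [lra |].
    pose proof (Hmono_le (u n) (x - d) Hun Hle); lra.
Qed.

Lemma is_lim_seq_log_rate (P sb2 alpha : R) (beta : nat -> R) :
  (forall L : nat, (1 <= L)%nat -> 0 < beta L < 1 /\ beta_eq P sb2 L (beta L)) ->
  0 < alpha -> alpha_eq P sb2 alpha ->
  is_lim_seq (fun L => - INR L * ln (beta L)) alpha.
Proof.
  intros Hbeta Halpha Hsnr_alpha.
  set (a := fun L => - INR L * ln (beta L)).
  assert (Ha : forall L, (1 <= L)%nat ->
            0 < a L /\ beta_eq P sb2 L (exp (- a L / INR L))).
  { intros L HL; destruct (Hbeta L HL) as [Hb Hbeq].
    assert (HLpos : 0 < INR L) by (apply lt_0_INR; lia).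
    assert (ln (beta L) < 0) by (rewrite <- ln_1; apply ln_increasing; lra).
    unfold a; split; [nra |].
    replace (- (- INR L * ln (beta L)) / INR L) with (ln (beta L)) by (field; lra).
    now rewrite exp_ln by lra. }
  assert (Hev : forall Q : nat -> Prop, (forall L, (1 <= L)%nat -> Q L) -> eventually Q)
    by (intros Q HQ; exists 1%nat; exact HQ).
  apply (is_lim_seq_of_lt_image alpha_snr); [exact alpha_snr_lt | exact Halpha | |].
  - apply Hev; intros L HL; apply Ha, HL.
  - replace (alpha_snr alpha) with (P / sb2) by (symmetry; exact Hsnr_alpha).
    apply (is_lim_seq_le_le_loc (fun L => P / sb2 / (1 + 2 * alpha / INR L)) _
             (fun _ => P / sb2)).
    + apply Hev; intros L HL; destruct (Ha L HL) as [HaL Hbeq].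
      now apply (alpha_snr_sandwich P sb2 alpha (a L) L).
    + apply is_lim_seq_div_one_add_inv.
    + apply is_lim_seq_const.
Qed.

Theorem mainTheorem3 (P sb2 : R) (beta : nat -> R) (alpha : R) :
  0 < P -> 0 < sb2 ->
  (forall L : nat, (1 <= L)%nat ->
     0 < beta L < 1 /\ beta_eq P sb2 L (beta L)) ->
  0 < alpha -> alpha_eq P sb2 alpha ->
  is_lim_seq (Csum beta) (alpha / ln 2).
Proof.
  (* Only the ratio P / sb2 = alpha_snr alpha enters. *)
  intros _ _ Hbeta Halpha Hsnr_alpha.
  apply is_lim_seq_ext with (fun L => - INR L * ln (beta L) * / ln 2).
  { intro L; unfold Csum, log2, Rdiv; ring. }
  apply (is_lim_seq_scal_r _ (/ ln 2) alpha).
  exact (is_lim_seq_log_rate P sb2 alpha beta Hbeta Halpha Hsnr_alpha).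
Qed.
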